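(* Let $\mathcal{X}$ and $\mathcal{Y}$ be finite sets and let $p(X,Y)$ be a fully supported probability distribution on $\mathcal{X}\times\mathcal{Y}$ (i.e. $p(x,y)>0$ for all $(x,y)$), with conditional $p(Y|X)$ and marginals $p(X)$, $p(Y)$, and assume that $p(Y)(y)=\sum_x p(y|x)p(x)$ is the uniform distribution on $\mathcal{Y}$. Let $\kappa\in C(\mathcal{X}\times\mathcal{Y},\mathcal{T})$ be a solution of the Intertwining Information Bottleneck (IIB) problem with parameter $\lambda=I(X;Y)$. Then for any pair of bijections $\sigma:\mathcal{X}\to\mathcal{X}$, $\tau:\mathcal{Y}\to\mathcal{Y}$, the pair $(\sigma,\tau)$ is an equivariance of $p(Y|X)$ if and only if $$\kappa\circ(\sigma\otimes\tau)=\kappa,\quad\text{i.e. }\ \kappa(t\mid \sigma(x),\tau(y))=\kappa(t\mid x,y)\ \text{ for all } (x,y,t)\in\mathcal{X}\times\mathcal{Y}\times\mathcal{T}.$$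
   Context: $\mathcal{T}:=\mathbb{N}$. For finite or countable sets $\mathcal{A},\mathcal{B}$, $C(\mathcal{A},\mathcal{B})$ denotes the set of channels (conditional probabilities) $\kappa(b|a)$ from $\mathcal{A}$ to $\mathcal{B}$; deterministic maps are viewed as deterministic channels and $\circ$ is channel composition. For a distribution $r$ on $\mathcal{X}\times\mathcal{Y}$ and $\kappa\in C(\mathcal{X}\times\mathcal{Y},\mathcal{T})$, $\kappa(r)$ is the distribution $t\mapsto\sum_{x,y}\kappa(t|x,y)r(x,y)$. $I_\kappa(X,Y;T)$ is the mutual information between $(X,Y)$ and $T$ under the joint distribution $p(x,y)\kappa(t|x,y)$, $D(\cdot\|\cdot)$ is the Kullback–Leibler divergence, and $I(X;Y)=D(p(X,Y)\|p(X)p(Y))$. For $0\le\lambda\le I(X;Y)$, the IIB problem is: minimise $I_\kappa(X,Y;T)$ over $\kappa\in C(\mathcal{X}\times\mathcal{Y},\mathcal{T})$ subject to $D(\kappa(p(X,Y))\,\|\,\kappa(p(X)p(Y)))=\lambda$; a solution is a minimiser. An (exact) equivariance of $p(Y|X)$ is a pair of bijections $(\sigma,\tau)$ of $\mathcal{X}$ and $\mathcal{Y}$ with $p(Y|X)\circ\sigma=\tau\circ p(Y|X)$ as channels, i.e. $p(y\mid\sigma(x))=p(\tau^{-1}(y)\mid x)$ for all $x,y$. *)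

From HB Require Import structures.
From mathcomp Require Import all_boot all_order all_algebra all_fingroup.
From mathcomp Require Import all_classical all_reals all_analysis.
Set Implicit Arguments. Unset Strict Implicit. Unset Printing Implicit Defensive.
Import Order.TTheory GRing.Theory Num.Theory.
Local Open Scope ring_scope.

Section IIB.
Variables (R : realType) (X Y : finType).

(* a joint distribution is a function p : X -> Y -> R; T := nat *)
Definition pX (p : X -> Y -> R) (x : X) : R := \sum_(y : Y) p x y.
Definition pY (p : X -> Y -> R) (y : Y) : R := \sum_(x : X) p x y.
Definition pcond (p : X -> Y -> R) (x : X) (y : Y) : R := p x y / pX p x.
Definition prodmarg (p : X -> Y -> R) (x : X) (y : Y) : R := pX p x * pY p y.

Definition fully_supported_distr (p : X -> Y -> R) : Prop :=
  (forall x y, 0 < p x y) /\ \sum_(x : X) \sum_(y : Y) p x y = 1.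

Definition channel (k : X -> Y -> nat -> R) : Prop :=
  forall x y, (forall t, 0 <= k x y t) /\
              (\sum_(0 <= t <oo) (k x y t)%:E = 1)%E.

Definition push (k : X -> Y -> nat -> R) (r : X -> Y -> R) (t : nat) : R :=
  \sum_(x : X) \sum_(y : Y) k x y t * r x y.

(* Kullback-Leibler divergence of distributions on nat (convention 0 ln 0 = 0) *)
Definition KLnat (a b : nat -> R) : \bar R :=
  (\sum_(0 <= t <oo) (a t * ln (a t / b t))%:E)%E.

Definition mutinf (p : X -> Y -> R) : R :=
  \sum_(x : X) \sum_(y : Y) p x y * ln (p x y / prodmarg p x y).

Definition mutinf_k (p : X -> Y -> R) (k : X -> Y -> nat -> R) : \bar R :=
  (\sum_(x : X) \sum_(y : Y) (p x y)%:E * KLnat (k x y) (push k p))%E.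

Definition iib_div (p : X -> Y -> R) (k : X -> Y -> nat -> R) : \bar R :=
  KLnat (push k p) (push k (prodmarg p)).

Definition IIB_solution (p : X -> Y -> R) (lam : R) (k : X -> Y -> nat -> R) : Prop :=
  [/\ channel k, iib_div p k = lam%:E &
      forall k', channel k' -> iib_div p k' = lam%:E ->
                 (mutinf_k p k <= mutinf_k p k')%E].

Definition equivariance (p : X -> Y -> R) (s : {perm X}) (tau : {perm Y}) : Prop :=
  forall x y, pcond p (s x) y = pcond p x ((tau^-1)%g y).

End IIB.

(* Let rho(x,y) = p(x,y) / (p(x) p(y)).  Since p(Y) is uniform, rho(x,y) is
   p(y|x) up to a constant factor, so (sigma, tau) is an equivariance exactly
   when rho is invariant under sigma x tau.  Two properties of an IIB solution
   kappa then give both directions.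
   - Averaging kappa(t|.) over the level sets of rho, with weights p, preserves
     kappa(p(X,Y)) and kappa(p(X)p(Y)), hence the constraint, and by Jensen's
     inequality for u ln u it does not increase I_kappa, strictly unless kappa
     is already constant on the level sets.  By optimality kappa factors
     through rho, so kappa is invariant whenever rho is.
   - With q = p(X)p(Y), the constraint lambda = I(X;Y) is the equality case of
     the data processing inequality D(kappa(p) || kappa(q)) <= D(p || q); the
     equality case of the log-sum inequality forces
     rho(x,y) = kappa(p)(t) / kappa(q)(t) whenever kappa(t|x,y) > 0.  Every
     (x,y) has such a t, so an invariant kappa makes rho invariant. *)

From HB Require Import structures.
From mathcomp Require Import all_boot all_order all_algebra all_fingroup.
From mathcomp Require Import all_classical all_reals all_analysis.
From mathcomp Require Import ring lra.
Import Order.TTheory GRing.Theory Num.Theory.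
Import numFieldNormedType.Exports.
Local Open Scope ring_scope.

Section ln_inequalities.
Context {R : realType}.
Implicit Types u v c : R.

Lemma ln_le_subr1 {v} : 0 < v -> ln v <= v - 1.
Proof. by move=> v0; have := @le_ln1Dx R (v - 1); rewrite subrKC; apply; lra. Qed.

Lemma ln_lt_subr1 {v} : 0 < v -> v != 1 -> ln v < v - 1.
Proof.
move=> v0 v1; have := @expR_gt1Dx R (ln v); rewrite lnK // ln_eq0 // => /(_ v1).
lra.
Qed.

Let gibbsE u v : 0 < u -> 0 < v ->
  u * ln (u / v) - u + v = u * (v / u - 1 - ln (v / u)).
Proof.
by move=> u0 v0; rewrite -invf_div lnV ?posrE ?divr_gt0 //; field; rewrite gt_eqF.
Qed.

Lemma gibbs_ge0 {u v} : 0 <= u -> 0 < v -> 0 <= u * ln (u / v) - u + v.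
Proof.
rewrite le0r => /predU1P[-> v0|u0 v0]; first by rewrite mul0r subr0 add0r ltW.
rewrite gibbsE //; apply: mulr_ge0; first exact: ltW.
by rewrite subr_ge0 ln_le_subr1 // divr_gt0.
Qed.

Lemma gibbs_eq0 {u v} : 0 <= u -> 0 < v -> u * ln (u / v) - u + v = 0 -> u = v.
Proof.
rewrite le0r => /predU1P[-> v0|u0 v0]; first by rewrite mul0r subr0 add0r => ->.
rewrite gibbsE // => /eqP; rewrite mulf_eq0 gt_eqF //= subr_eq0 => /eqP lnE.
have [/divr1_eq ->|vu1] := eqVneq (v / u) 1; first by [].
by have := ln_lt_subr1 (divr_gt0 v0 u0) vu1; rewrite lnE ltxx.
Qed.

Lemma xlnx_div_bound {u v c} : 0 <= u -> 0 <= v -> u <= c * v ->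
  `|u * ln (u / v)| <= c * u + v.
Proof.
rewrite le0r => /predU1P[-> v0|u0 v0 ucv]; first by rewrite mul0r normr0 mulr0 add0r.
have vp : 0 < v.
  by rewrite lt_def v0 andbT; apply: contraTneq ucv => ->; rewrite mulr0 -ltNge.
have cp : 0 < c by rewrite -(pmulr_lgt0 _ vp) (lt_le_trans u0).
rewrite ler_norml; apply/andP; split.
- have -> : u * ln (u / v) = - (u * ln (v / u)).
    by rewrite -invf_div lnV ?posrE ?divr_gt0 // mulrN.
  have : u * ln (v / u) <= u * (v / u - 1).
    by rewrite ler_pM2l // ln_le_subr1 // divr_gt0.
  have -> : u * (v / u - 1) = v - u by field; rewrite gt_eqF.
  have : 0 <= c * u by rewrite mulr_ge0 ?ltW.
  lra.
- apply: le_trans (_ : u * (u / v - 1) <= _).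
    by rewrite ler_pM2l // ln_le_subr1 // divr_gt0.
  have : u * (u / v) <= u * c by rewrite ler_pM2l // ler_pdivrMr // mulrC.
  lra.
Qed.

End ln_inequalities.

Section series_sums.
Context {R : realType}.
Implicit Types (f g : R ^nat) (l m c : R).
Local Open Scope classical_set_scope.

Definition sums f l := series f @ \oo --> l.

Lemma sums_unique {f l m} : sums f l -> sums f m -> l = m.
Proof. exact: cvg_unique. Qed.

Lemma eq_sums {f g l} : f =1 g -> sums f l -> sums g l.
Proof. by move=> /funext ->. Qed.

Lemma sums0 : sums (fun=> 0) 0.
Proof.
rewrite /sums (_ : series _ = fun=> 0); first exact: cvg_cst.
by apply/funext => n; rewrite /series /= big1.
Qed.

Lemma sumsD {f g l m} : sums f l -> sums g m -> sums (fun t => f t + g t) (l + m).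
Proof. by move=> fl gm; rewrite /sums (seriesD f g); apply: cvgD. Qed.

Lemma sumsZ c {f l} : sums f l -> sums (fun t => c * f t) (c * l).
Proof.
move=> fl; rewrite /sums (_ : series _ = fun n => c * series f n).
  exact: cvgMl_tmp.
by apply/funext => n; rewrite /series /= big_distrr.
Qed.

Lemma sumsB {f g l m} : sums f l -> sums g m -> sums (fun t => f t - g t) (l - m).
Proof.
move=> fl /(sumsZ (-1)); rewrite mulN1r => gm.
by apply: eq_sums (sumsD fl gm) => t; rewrite mulN1r.
Qed.

Lemma sums_sum {I : finType} {P : pred I} {F : I -> R ^nat} {L : I -> R} :
  (forall i, P i -> sums (F i) (L i)) ->
  sums (fun t => \sum_(i | P i) F i t) (\sum_(i | P i) L i).
Proof.
move=> FL; rewrite /sums (_ : series _ = fun n => \sum_(i | P i) series (F i) n).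
  by apply: cvg_big => [|i Pi]; [exact: add_continuous | exact: FL].
by apply/funext => n; rewrite /series /= exchange_big.
Qed.

Lemma ler_sums {f g l m} : sums f l -> sums g m -> (forall t, f t <= g t) -> l <= m.
Proof.
move=> fl gm fg; apply: ler_cvg_to fl gm _.
by apply: nearW => n; rewrite ler_sum.
Qed.

Lemma sums_ge0_eq0 {f} : (forall t, 0 <= f t) -> sums f 0 -> forall t, f t = 0.
Proof.
move=> f0 f_0 t; apply/eqP; rewrite eq_le f0 andbT.
have nd : nondecreasing_seq (series f).
  by apply/nondecreasing_seqP => n; rewrite seriesSr lerDl.
have := nondecreasing_cvgn_le nd (cvgP _ f_0) t.+1.
rewrite (cvg_lim _ f_0) // seriesSr; apply: le_trans.
by rewrite lerDr sumr_ge0.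
Qed.

Lemma sums_le_eq {f g l m} : (forall t, f t <= g t) -> sums f l -> sums g m ->
  m <= l -> forall t, f t = g t.
Proof.
move=> fg fl gm ml t; apply/eqP; rewrite eq_sym -subr_eq0; apply/eqP.
have gfml := sumsB gm fl.
have lm : l = m by apply/eqP; rewrite eq_le ml (ler_sums fl gm fg).
rewrite lm subrr in gfml.
by apply: sums_ge0_eq0 gfml t => s; rewrite subr_ge0.
Qed.

Lemma sums_normr_le {f g m} : (forall t, `|f t| <= g t) -> sums g m ->
  exists l, sums f l.
Proof.
move=> fg gm; apply/cvg_ex/normed_cvg/(@series_le_cvg _ _ g) => //.
- by move=> t /=.
- by move=> t; apply: le_trans (fg t).
- by apply/cvg_ex; exists m.
Qed.

Lemma sums_eseries {f l} : sums f l -> (\sum_(0 <= t <oo) (f t)%:E)%E = l%:E.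
Proof.
move=> fl; have -> : (fun n => \sum_(0 <= t < n) (f t)%:E)%E = EFin \o series f.
  by apply/funext => n /=; rewrite sumEFin.
by rewrite EFin_lim ?(cvg_lim _ fl) //; apply/cvg_ex; exists l.
Qed.

Lemma eseries_sums {f l} : (forall t, 0 <= f t) ->
  (\sum_(0 <= t <oo) (f t)%:E)%E = l%:E -> sums f l.
Proof.
move=> f0 fl; have /cvg_ex[l' fl'] : cvgn (series f).
  by apply: nnseries_is_cvg => //; rewrite fl ltry.
by have := sums_eseries fl'; rewrite fl => -[->].
Qed.

End series_sums.

Section finite_sums.
Context {R : realType} {I : finType}.
Implicit Types (c w f : I -> R).

Lemma ler_sum_term {F : I -> R} i : (forall j, 0 <= F j) -> F i <= \sum_j F j.
Proof. by move=> F0; rewrite (bigD1 i) //= lerDl sumr_ge0. Qed.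

Lemma weighted_sum_gt0 {c w} : (forall i, 0 <= c i) -> (forall i, 0 < w i) ->
  0 < \sum_i c i * w i <-> exists i, 0 < c i.
Proof.
move=> c_ge0 w_gt0.
have cw_ge0 i : 0 <= c i * w i := mulr_ge0 (c_ge0 i) (ltW (w_gt0 i)).
split=> [sum_gt0 | [i ci_gt0]].
- have sum_neq0 : \sum_i c i * w i <> 0 by move=> e; rewrite e ltxx in sum_gt0.
  have [i /andP[_]] := psumr_neq0P (fun i _ => cw_ge0 i) sum_neq0.
  by rewrite pmulr_lgt0 //; exists i.
- by apply: lt_le_trans (ler_sum_term i cw_ge0); rewrite mulr_gt0.
Qed.

Section log_sum.
Context {c p q : I -> R}.
Hypotheses (c_ge0 : forall i, 0 <= c i) (p_gt0 : forall i, 0 < p i)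
  (q_gt0 : forall i, 0 < q i).
Let a := \sum_i c i * p i.
Let b := \sum_i c i * q i.

Let b_gt0 : 0 < a -> 0 < b.
Proof. by move/(weighted_sum_gt0 c_ge0 p_gt0)/(weighted_sum_gt0 c_ge0 q_gt0). Qed.

Let gibbs_term i := p i * ln (p i / (q i * (a / b))) - p i + q i * (a / b).

Let gibbs_term_ge0 i : 0 < a -> 0 <= c i * gibbs_term i.
Proof.
move=> a_gt0; rewrite mulr_ge0 // gibbs_ge0 ?ltW //.
by rewrite mulr_gt0 ?divr_gt0 ?b_gt0.
Qed.

Let log_sum_gap : 0 < a ->
  \sum_i c i * (p i * ln (p i / q i)) - a * ln (a / b) = \sum_i c i * gibbs_term i.
Proof.
move=> a_gt0; have lnE i : ln (p i / (q i * (a / b))) = ln (p i / q i) - ln (a / b).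
  by rewrite invfM mulrA [LHS]ln_div ?posrE ?divr_gt0 ?p_gt0 ?q_gt0 ?b_gt0.
have -> : \sum_i c i * gibbs_term i =
    \sum_i c i * (p i * ln (p i / q i)) - a * ln (a / b) - a + b * (a / b).
  rewrite /gibbs_term; under eq_bigr do rewrite lnE; move: (a / b) => r.
  rewrite /a /b !big_distrl -!sumrN -!big_split /=.
  by apply: eq_bigr => i _; ring.
by rewrite mulrCA divff ?gt_eqF ?b_gt0 // mulr1 subrK.
Qed.

Lemma log_sum_le : a * ln (a / b) <= \sum_i c i * (p i * ln (p i / q i)).
Proof.
have [a_gt0|a_le0] := ltP 0 a.
  by rewrite -subr_ge0 log_sum_gap //; apply: sumr_ge0 => i _; apply: gibbs_term_ge0.
have c0 i : c i = 0.
  apply/eqP; rewrite eq_le c_ge0 andbT leNgt; apply/negP => ci_gt0.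
  have : 0 < a by apply/(weighted_sum_gt0 c_ge0 p_gt0); exists i.
  by rewrite ltNge a_le0.
have -> : a = 0 by rewrite /a big1 // => i _; rewrite c0 mul0r.
by rewrite mul0r big1 // => i _; rewrite c0 mul0r.
Qed.

Lemma log_sum_eq : a * ln (a / b) = \sum_i c i * (p i * ln (p i / q i)) ->
  forall i, 0 < c i -> p i / q i = a / b.
Proof.
move=> eq_ab i ci_gt0.
have a_gt0 : 0 < a by apply/(weighted_sum_gt0 c_ge0 p_gt0); exists i.
have := log_sum_gap a_gt0; rewrite -eq_ab subrr => /esym gap0.
have /eqP := psumr_eq0P (fun j _ => gibbs_term_ge0 j a_gt0) gap0 (i := i) isT.
rewrite mulf_eq0 gt_eqF //= => /eqP /gibbs_eq0 -> //.
- by rewrite mulrC mulKf ?gt_eqF.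
- exact: ltW.
- by rewrite mulr_gt0 ?divr_gt0 ?b_gt0.
Qed.

End log_sum.

Section level_sets.
Context {T : eqType}.
Variables (w : I -> R) (rho : I -> T).
Hypothesis w_gt0 : forall i, 0 < w i.

Definition level_mass (x : T) := \sum_(j | rho j == x) w j.

Definition level_avg f (x : T) := (\sum_(j | rho j == x) w j * f j) / level_mass x.

Lemma level_mass_gt0 i : 0 < level_mass (rho i).
Proof.
apply: lt_le_trans (w_gt0 i) _; rewrite /level_mass (bigD1 i) //= lerDl.
by apply: sumr_ge0 => j _; apply: ltW.
Qed.

Lemma sum_level_avg f (h : T -> R) :
  \sum_i w i * level_avg f (rho i) * h (rho i) = \sum_i w i * f i * h (rho i).
Proof.
transitivity (\sum_i \sum_(j | rho j == rho i)
    w i * (w j * f j * h (rho j) / level_mass (rho j))).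
  apply: eq_bigr => i _; rewrite /level_avg; set S := \sum_(j | _) _.
  rewrite (_ : w i * (S / level_mass (rho i)) * h (rho i) =
    S * (w i * h (rho i) / level_mass (rho i))); last by ring.
  by rewrite /S big_distrl /=; apply: eq_bigr => j /eqP ->; ring.
rewrite (exchange_big_dep xpredT) //=; apply: eq_bigr => j _.
rewrite -big_distrl /= (eq_bigl (fun i => rho i == rho j)) => [|i]; last first.
  by rewrite eq_sym.
by rewrite mulrC divfK // gt_eqF // level_mass_gt0.
Qed.

Lemma level_avg_ge0 {f} x : (forall i, 0 <= f i) -> 0 <= level_avg f x.
Proof.
move=> f_ge0; rewrite /level_avg divr_ge0 ?sumr_ge0 // => [j _|].
  exact: mulr_ge0 (ltW (w_gt0 j)) (f_ge0 j).
by move=> j _; apply: ltW.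
Qed.

Lemma level_avg_gt0 {f i} :
  (forall i, 0 <= f i) -> 0 < f i -> 0 < level_avg f (rho i).
Proof.
move=> f_ge0 fi_gt0; rewrite /level_avg divr_gt0 ?level_mass_gt0 //.
apply: lt_le_trans (_ : w i * f i <= _); first by rewrite mulr_gt0.
rewrite (bigD1 i) //= lerDl sumr_ge0 // => j _.
exact: mulr_ge0 (ltW (w_gt0 j)) (f_ge0 j).
Qed.

Section xlnx.
Context {f : I -> R} {A : R}.
Hypotheses (f_ge0 : forall i, 0 <= f i) (A_gt0 : forall i, 0 < f i -> 0 < A).
Let fb i := level_avg f (rho i).

Let gibbs_avg_ge0 i : 0 <= w i * (f i * ln (f i / fb i) - f i + fb i).
Proof.
apply: mulr_ge0; first exact: ltW.
have [fi0|fi_gt0] := eqVneq (f i) 0.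
  by rewrite fi0 mul0r subr0 add0r level_avg_ge0.
apply: gibbs_ge0 (f_ge0 i) (level_avg_gt0 f_ge0 _).
by rewrite lt_def fi_gt0 f_ge0.
Qed.

Let gibbs_avg_eq0 i : f i * ln (f i / fb i) - f i + fb i = 0 -> f i = fb i.
Proof.
have [fi0|fi_gt0] := eqVneq (f i) 0.
  by rewrite fi0 mul0r subr0 add0r => ->.
apply: gibbs_eq0 (f_ge0 i) (level_avg_gt0 f_ge0 _).
by rewrite lt_def fi_gt0 f_ge0.
Qed.

Let xlnx_level_gap :
  \sum_i w i * (f i * ln (f i / A)) - \sum_i w i * (fb i * ln (fb i / A)) =
  \sum_i w i * (f i * ln (f i / fb i) - f i + fb i).
Proof.
have avg_xlnx : \sum_i w i * (fb i * ln (fb i / A)) =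
    \sum_i w i * (f i * ln (fb i / A)).
  under eq_bigr do rewrite mulrA.
  rewrite (sum_level_avg f (fun x => ln (level_avg f x / A))).
  by under eq_bigr do rewrite -mulrA.
have avg_mass : \sum_i w i * fb i = \sum_i w i * f i.
  have := sum_level_avg f (fun=> 1).
  by under eq_bigr do rewrite mulr1; under [in X in _ = X -> _]eq_bigr do
    rewrite mulr1.
have lnE i : f i * ln (f i / A) - f i * ln (fb i / A) = f i * ln (f i / fb i).
  have [->|fi_gt0] := eqVneq (f i) 0; first by rewrite !mul0r subrr.
  have fi_pos : 0 < f i by rewrite lt_def fi_gt0 f_ge0.
  have fbi_pos : 0 < fb i := level_avg_gt0 f_ge0 fi_pos.
  have A_pos := A_gt0 i fi_pos; move: (fb i) fbi_pos => v v_pos.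
  by rewrite !ln_div ?posrE //; ring.
rewrite avg_xlnx -sumrB.
have -> : \sum_i w i * (f i * ln (f i / fb i) - f i + fb i) =
    \sum_i w i * (f i * ln (f i / fb i)) - \sum_i w i * f i + \sum_i w i * fb i.
  by rewrite -sumrB -big_split /=; apply: eq_bigr => i _; ring.
by rewrite avg_mass subrK; apply: eq_bigr => i _; rewrite -mulrBr lnE.
Qed.

Lemma xlnx_level_avg_le :
  \sum_i w i * (level_avg f (rho i) * ln (level_avg f (rho i) / A)) <=
  \sum_i w i * (f i * ln (f i / A)).
Proof.
by rewrite -subr_ge0 xlnx_level_gap; apply: sumr_ge0 => i _; apply: gibbs_avg_ge0.
Qed.

Lemma xlnx_level_avg_eq :
  \sum_i w i * (level_avg f (rho i) * ln (level_avg f (rho i) / A)) =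
  \sum_i w i * (f i * ln (f i / A)) -> forall i, f i = level_avg f (rho i).
Proof.
move=> /esym/eqP; rewrite -subr_eq0 xlnx_level_gap => /eqP gap0 i.
apply: gibbs_avg_eq0; apply/eqP.
have /eqP := psumr_eq0P (fun j _ => gibbs_avg_ge0 j) gap0 (i := i) isT.
by rewrite mulf_eq0 gt_eqF.
Qed.

End xlnx.
End level_sets.
End finite_sums.

Section kernels.
Context {R : realType} {I : finType}.
Implicit Types (k : I -> nat -> R) (w p q : I -> R).

Definition stochastic k := forall i, (forall t, 0 <= k i t) /\ sums (k i) 1.

Definition kpush k w t := \sum_i k i t * w i.

Definition kmutinf p k : \bar R := (\sum_i (p i)%:E * KLnat (k i) (kpush k p))%E.

Lemma kmutinfE {p k} {L : I -> R} :
  (forall i, sums (fun t => k i t * ln (k i t / kpush k p t)) (L i)) ->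
  kmutinf p k = (\sum_i p i * L i)%:E.
Proof.
move=> kL; rewrite /kmutinf -sumEFin; apply: eq_bigr => i _.
by rewrite /KLnat (sums_eseries (kL i)).
Qed.

Section stochastic_kernel.
Context {k : I -> nat -> R} (k_stoch : stochastic k).

Let k_ge0 i t : 0 <= k i t. Proof. exact: (k_stoch i).1. Qed.
Let k_sums1 i : sums (k i) 1. Proof. exact: (k_stoch i).2. Qed.

Lemma kpush_ge0 {w} t : (forall i, 0 <= w i) -> 0 <= kpush k w t.
Proof. by move=> w_ge0; apply: sumr_ge0 => i _; rewrite mulr_ge0. Qed.

Lemma ler_kpush_term {w} i t : (forall i, 0 <= w i) -> k i t * w i <= kpush k w t.
Proof. by move=> w_ge0; apply: ler_sum_term => j; rewrite mulr_ge0. Qed.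

Lemma sums_kpush w : sums (kpush k w) (\sum_i w i).
Proof.
apply: sums_sum => i _; have := sumsZ (w i) (k_sums1 i).
by rewrite mulr1; apply: eq_sums => t; rewrite mulrC.
Qed.

Lemma stochastic_support i : exists t, 0 < k i t.
Proof.
apply/not_existsP => k0; have k_eq0 t : k i t = 0.
  by apply/eqP; rewrite eq_le k_ge0 andbT leNgt; apply/negP => /(k0 t).
have := sums_unique (k_sums1 i) (eq_sums (fun t => esym (k_eq0 t)) sums0).
by move/eqP; rewrite oner_eq0.
Qed.

Lemma sums_xlnx_kpush {p} i : (forall i, 0 < p i) ->
  exists L, sums (fun t => k i t * ln (k i t / kpush k p t)) L.
Proof.
move=> p_gt0; have p_ge0 j : 0 <= p j := ltW (p_gt0 j).
apply: (sums_normr_le _ (sumsD (sumsZ ((p i)^-1) (k_sums1 i)) (sums_kpush p))).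
move=> t; apply: xlnx_div_bound (k_ge0 i t) (kpush_ge0 t p_ge0) _.
by rewrite ler_pdivlMl // mulrC ler_kpush_term.
Qed.

Lemma kpush_KLnat_eq_ratio {p q} : (forall i, 0 < p i) -> (forall i, 0 < q i) ->
  KLnat (kpush k p) (kpush k q) = (\sum_i p i * ln (p i / q i))%:E ->
  forall i t, 0 < k i t -> p i / q i = kpush k p t / kpush k q t.
Proof.
move=> p_gt0 q_gt0 KLE i t kit.
pose D i := p i * ln (p i / q i).
have log_sum s : kpush k p s * ln (kpush k p s / kpush k q s) <= kpush k D s.
  exact: log_sum_le.
have [L aL] :
    exists L, sums (fun s => kpush k p s * ln (kpush k p s / kpush k q s)) L.
  pose M := \sum_i p i / q i.
  have q_ge0 j : 0 <= q j := ltW (q_gt0 j).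
  apply: (sums_normr_le _ (sumsD (sumsZ M (sums_kpush p)) (sums_kpush q))).
  move=> s; apply: xlnx_div_bound; rewrite ?kpush_ge0 //.
    by move=> j; apply: ltW.
  rewrite /kpush big_distrr /=; apply: ler_sum => j _.
  rewrite mulrCA ler_wpM2l // -ler_pdivrMr //.
  by apply: ler_sum_term => l; rewrite divr_ge0 ?ltW.
have L_eq : L = \sum_i D i by move: KLE; rewrite /KLnat (sums_eseries aL) => -[].
have := sums_le_eq log_sum aL (sums_kpush D); rewrite L_eq lexx => /(_ isT t).
by move/(log_sum_eq (k_ge0^~ t) p_gt0 q_gt0); apply.
Qed.

End stochastic_kernel.

Section coarse_graining.
Context {T : eqType}.
Variables (p : I -> R) (rho : I -> T) (k : I -> nat -> R).
Hypotheses (p_gt0 : forall i, 0 < p i) (k_stoch : stochastic k).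

Definition coarse i t := level_avg p rho (k^~ t) (rho i).

Lemma kpush_coarse (h : T -> R) t :
  kpush coarse (fun i => p i * h (rho i)) t = kpush k (fun i => p i * h (rho i)) t.
Proof.
rewrite /kpush; transitivity (\sum_i p i * coarse i t * h (rho i)).
  by apply: eq_bigr => i _; ring.
by rewrite (sum_level_avg p rho p_gt0); apply: eq_bigr => i _; ring.
Qed.

Lemma kpush_coarse1 : kpush coarse p = kpush k p.
Proof.
apply/funext => t; have := kpush_coarse (fun=> 1) t; rewrite /kpush.
by under eq_bigr do rewrite mulr1; under [in X in _ = X -> _]eq_bigr do
  rewrite mulr1.
Qed.

Lemma coarse_stochastic : stochastic coarse.
Proof.
move=> i; split=> [t|]; first by apply: level_avg_ge0 => // j; case: (k_stoch j).
have := sumsZ (level_mass p rho (rho i))^-1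
  (sums_sum (fun j (_ : rho j == rho i) => sumsZ (p j) (k_stoch j).2)).
rewrite (eq_bigr p) => [|j _]; last by rewrite mulr1.
rewrite mulVf ?gt_eqF ?level_mass_gt0 //.
by apply: eq_sums => t; rewrite mulrC.
Qed.

Lemma coarse_eq_of_kmutinf_le :
  (kmutinf p k <= kmutinf p coarse)%E -> forall i t, k i t = coarse i t.
Proof.
move=> le_kmutinf i t; have p_ge0 j : 0 <= p j := ltW (p_gt0 j).
have [L kL] := fin_all_exists (fun i => sums_xlnx_kpush k_stoch i p_gt0).
have [Lb kbL] := fin_all_exists (fun i => sums_xlnx_kpush coarse_stochastic i p_gt0).
move: le_kmutinf; rewrite (kmutinfE kL) (kmutinfE kbL) lee_fin => le_sum.
rewrite kpush_coarse1 in kbL; set A := kpush k p in kL kbL.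
have A_gt0 s j : 0 < k j s -> 0 < A s.
  move=> kjs; apply: lt_le_trans (ler_kpush_term k_stoch j s p_ge0).
  by rewrite mulr_gt0.
have k_ge0 s j : 0 <= k j s by case: (k_stoch j).
have := sums_le_eq (fun s => xlnx_level_avg_le p rho p_gt0 (k_ge0 s) (A_gt0 s))
  (sums_sum (fun j _ => sumsZ (p j) (kbL j)))
  (sums_sum (fun j _ => sumsZ (p j) (kL j))) le_sum t.
by move/(xlnx_level_avg_eq p rho p_gt0 (k_ge0 t) (A_gt0 t)).
Qed.

End coarse_graining.
End kernels.

Definition lratio {R : realType} {X Y : finType} (p : X -> Y -> R) x y :=
  p x y / prodmarg p x y.

Section information_bottleneck.
Context {R : realType} {X Y : finType}.
Implicit Types (p w : X -> Y -> R) (k : X -> Y -> nat -> R).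

Lemma push_kpush k w t :
  push k w t = kpush (fun u : X * Y => k u.1 u.2) (fun u => w u.1 u.2) t.
Proof. exact: pair_bigA. Qed.

Lemma channel_stochastic k : channel k <-> stochastic (fun u : X * Y => k u.1 u.2).
Proof.
split=> [k_chan [x y] | k_stoch x y].
- by have [k_ge0 k_sum1] := k_chan x y; split=> //; apply: eseries_sums.
- by have [k_ge0 k_sums1] := k_stoch (x, y); split=> //; apply: sums_eseries.
Qed.

Lemma mutinf_k_kmutinf p k :
  mutinf_k p k = kmutinf (fun u : X * Y => p u.1 u.2) (fun u => k u.1 u.2).
Proof.
rewrite /mutinf_k /kmutinf pair_bigA; apply: eq_bigr => u _.
by congr (_ * KLnat _ _)%E; apply/funext => t; apply: push_kpush.
Qed.

Lemma iib_div_kpush p k : iib_div p k =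
  KLnat (kpush (fun u : X * Y => k u.1 u.2) (fun u => p u.1 u.2))
        (kpush (fun u : X * Y => k u.1 u.2) (fun u => prodmarg p u.1 u.2)).
Proof. by congr KLnat; apply/funext => t; apply: push_kpush. Qed.

Lemma mutinfE p :
  mutinf p = \sum_(u : X * Y) p u.1 u.2 * ln (p u.1 u.2 / prodmarg p u.1 u.2).
Proof. exact: pair_bigA. Qed.

Section fully_supported.
Variable p : X -> Y -> R.
Hypothesis p_gt0 : forall x y, 0 < p x y.

Local Notation P := (fun u : X * Y => p u.1 u.2).
Local Notation Q := (fun u : X * Y => prodmarg p u.1 u.2).
Local Notation rho := (fun u : X * Y => lratio p u.1 u.2).

Lemma prodmarg_gt0 x y : 0 < prodmarg p x y.
Proof.
have p_ge0 x' y' : 0 <= p x' y' := ltW (p_gt0 x' y').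
rewrite mulr_gt0 // (lt_le_trans (p_gt0 x y)) //; exact: ler_sum_term.
Qed.

Lemma IIB_solution_coarse lam k : IIB_solution p lam k ->
  forall x y t, k x y t = coarse P rho (fun u => k u.1 u.2) (x, y) t.
Proof.
case=> k_chan k_div k_opt.
have K_stoch := (channel_stochastic k).1 k_chan.
have P_gt0 (u : X * Y) : 0 < P u := p_gt0 u.1 u.2.
pose kb a b := coarse P rho (fun u => k u.1 u.2) (a, b).
have kb_chan : channel kb by apply/channel_stochastic; apply: coarse_stochastic.
have Q_E : Q = fun u => P u * (rho u)^-1.
  by apply/funext => u; rewrite /lratio invf_div mulrCA divff ?mulr1 // gt_eqF.
have kb_div : iib_div p kb = lam%:E.
  rewrite -k_div !iib_div_kpush Q_E; congr KLnat.
    exact: (kpush_coarse1 P rho _ P_gt0).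
  by apply/funext => s; exact: (kpush_coarse P rho _ P_gt0 (fun c => c^-1)).
have := k_opt kb kb_chan kb_div; rewrite !mutinf_k_kmutinf.
move/(coarse_eq_of_kmutinf_le P rho _ P_gt0 K_stoch) => k_eq x y.
exact: k_eq (x, y).
Qed.

Lemma IIB_solution_ratio k : IIB_solution p (mutinf p) k ->
  forall x y t, 0 < k x y t ->
  lratio p x y = kpush (fun u => k u.1 u.2) P t / kpush (fun u => k u.1 u.2) Q t.
Proof.
case=> k_chan k_div _ x y t.
have K_stoch := (channel_stochastic k).1 k_chan.
apply: (kpush_KLnat_eq_ratio K_stoch _ _ _ (x, y) t) => [u|u|].
- exact: p_gt0.
- exact: prodmarg_gt0.
- by rewrite -iib_div_kpush k_div mutinfE.
Qed.

Lemma equivariance_lratio c s tau : (forall y, pY p y = c) ->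
  equivariance p s tau <-> forall x y, lratio p (s x) (tau y) = lratio p x y.
Proof.
move=> pY_c; have lratioE x y : lratio p x y = pcond p x y / c.
  by rewrite /lratio /prodmarg /pcond -(pY_c y) invfM mulrA.
have c_neq0 (x : X) (y : Y) : c != 0.
  rewrite -(pY_c y) gt_eqF // (lt_le_trans (p_gt0 x y)) //.
  by apply: ler_sum_term => x'; apply: ltW.
split=> [eqv x y | lratio_inv x y].
- by rewrite !lratioE eqv permK.
- apply: (divIf (c_neq0 x y)); rewrite /= -!lratioE.
  by rewrite -{1}(permKV tau y) lratio_inv.
Qed.

End fully_supported.
End information_bottleneck.

Theorem theorem2 (R : realType) (X Y : finType) (p : X -> Y -> R)
  (k : X -> Y -> nat -> R) :
  fully_supported_distr p ->
  (forall y : Y, pY p y = #|Y|%:R^-1) ->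
  IIB_solution p (mutinf p) k ->
  forall (s : {perm X}) (tau : {perm Y}),
    equivariance p s tau <-> (forall x y t, k (s x) (tau y) t = k x y t).
Proof.
move=> [p_gt0 _] pY_unif k_sol s tau.
have k_coarse := IIB_solution_coarse p p_gt0 _ _ k_sol.
have k_ratio := IIB_solution_ratio p p_gt0 k k_sol.
rewrite (equivariance_lratio p p_gt0 _ s tau pY_unif).
split=> [lratio_inv x y t | k_inv x y].
- by rewrite !k_coarse /coarse /= lratio_inv.
- have [k_chan _ _] := k_sol.
  have [t kt] := stochastic_support ((channel_stochastic k).1 k_chan) (x, y).
  by rewrite (k_ratio x y t kt) (k_ratio (s x) (tau y) t) // k_inv.
Qed.
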